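(* Let $A,K$ be associative algebras and $\xi:A\to\mathrm{Out}(K)$ a coupling admitting a bimultiplication law covering it. Then the $A$-kernel $(K,\xi)$ is extendible if and only if $\mathrm{Obs}(\xi)=0$ in $HH^3(A,\mathrm{Anni}K)$.
   Context: All algebras are associative, not necessarily unital, over a field $\mathbb F$. For an algebra $K$, a bimultiplication of $K$ is a pair $(u,v)$ of linear maps $K\to K$ with $k_1u(k_2)=v(k_1)k_2$, $u(k_1k_2)=u(k_1)k_2$, $v(k_1k_2)=k_1v(k_2)$; these form an algebra $\mathrm{Mul}(K)$ with product $(u_1,v_1)(u_2,v_2)=(u_1\circ u_2,\ v_2\circ v_1)$. $\epsilon:K\to\mathrm{Mul}(K)$, $\epsilon(k_0)=(k\mapsto k_0k,\ k\mapsto kk_0)$; $\mathrm{Inn}(K)=\epsilon(K)$, $\mathrm{Out}(K)=\mathrm{Mul}(K)/\mathrm{Inn}(K)$ with projection $\natural$; $\mathrm{Anni}K=\{k: kK=0=Kk\}$. A coupling is an algebra homomorphism $\xi:A\to\mathrm{Out}(K)$; $(K,\xi)$ is called an $A$-kernel. A bimultiplication law covering $\xi$ is a linear map $\mu:A\to\mathrm{Mul}(K)$, $\mu(a)=(u_a,v_a)$, with $\natural\circ\mu=\xi$ and $u_av_b=v_bu_a$ for all $a,b\in A$; $\mathrm{Anni}K$ is then an $A$-bimodule via $a\cdot n=u_a(n)$, $n\cdot a=v_a(n)$, independent of $\mu$. Curvature $R^\mu(a_1,a_2)=\mu(a_1)\mu(a_2)-\mu(a_1a_2)\in\mathrm{Inn}(K)$;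 a hindrance is a bilinear $h:A\times A\to K$ with $\epsilon\circ h=R^\mu$; $f(\mu,h)(a_1,a_2,a_3)=u_{a_1}h(a_2,a_3)-h(a_1a_2,a_3)+h(a_1,a_2a_3)-v_{a_3}h(a_1,a_2)$ is a Hochschild 3-cocycle with values in $\mathrm{Anni}K$ whose class $\mathrm{Obs}(\xi)\in HH^3(A,\mathrm{Anni}K)$ is independent of $\mu,h$. The kernel $(K,\xi)$ is extendible if there is an algebra $B$ containing $K$ as a two-sided ideal and a surjective algebra homomorphism $\beta:B\to A$ with kernel $K$ such that for a linear section $\gamma$ of $\beta$, $\xi(a)=\natural\big(k\mapsto\gamma(a)k,\ k\mapsto k\gamma(a)\big)$ for all $a\in A$. *)

From HB Require Import structures.
From mathcomp Require Import all_boot all_order all_algebra.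
Set Implicit Arguments. Unset Strict Implicit. Unset Printing Implicit Defensive.
Import GRing.Theory.
Local Open Scope ring_scope.

Record nalg (F : fieldType) := NAlg {
  ncarrier :> lmodType F;
  nmul : ncarrier -> ncarrier -> ncarrier;
  nmulA : forall x y z, nmul x (nmul y z) = nmul (nmul x y) z;
  nmulDl : forall x y z, nmul (x + y) z = nmul x z + nmul y z;
  nmulDr : forall x y z, nmul x (y + z) = nmul x y + nmul x z;
  nmulZl : forall (c : F) x y, nmul (c *: x) y = c *: nmul x y;
  nmulZr : forall (c : F) x y, nmul x (c *: y) = c *: nmul x y
}.
Arguments nmul {F} n _ _.

Section Defs.
Variable F : fieldType.

Definition is_lin (V W : lmodType F) (f : V -> W) : Prop :=
  forall (c : F) (x y : V), f (c *: x + y) = c *: f x + f y.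

Definition is_bilin (U V W : lmodType F) (g : U -> V -> W) : Prop :=
  (forall y, is_lin (fun x => g x y)) /\ (forall x, is_lin (g x)).

Variable K : nalg F.

(* Pairs of linear maps K -> K; Mul(K) is the subset of bimultiplications. *)
Definition mpair := ((K -> K) * (K -> K))%type.

Definition is_bimult (m : mpair) : Prop :=
  [/\ is_lin m.1, is_lin m.2,
      (forall k1 k2, nmul K k1 (m.1 k2) = nmul K (m.2 k1) k2),
      (forall k1 k2, m.1 (nmul K k1 k2) = nmul K (m.1 k1) k2) &
      (forall k1 k2, m.2 (nmul K k1 k2) = nmul K k1 (m.2 k2))].

Definition padd (m1 m2 : mpair) : mpair :=
  (fun k => m1.1 k + m2.1 k, fun k => m1.2 k + m2.2 k).
Definition pscale (c : F) (m : mpair) : mpair :=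
  (fun k => c *: m.1 k, fun k => c *: m.2 k).
Definition pmul (m1 m2 : mpair) : mpair :=
  (fun k => m1.1 (m2.1 k), fun k => m2.2 (m1.2 k)).
Definition psub (m1 m2 : mpair) : mpair :=
  (fun k => m1.1 k - m2.1 k, fun k => m1.2 k - m2.2 k).

Definition eps (k0 : K) : mpair := (fun k => nmul K k0 k, fun k => nmul K k k0).

(* Equality in Out(K) = Mul(K)/Inn(K): m1 - m2 is inner. *)
Definition out_eq (m1 m2 : mpair) : Prop :=
  exists k0 : K, forall k, m1.1 k = m2.1 k + (eps k0).1 k /\
                           m1.2 k = m2.2 k + (eps k0).2 k.

Definition in_anni (n : K) : Prop :=
  forall k, nmul K n k = 0 /\ nmul K k n = 0.

Variable A : nalg F.

(* A coupling xi : A -> Out(K), given by a choice of representatives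
   xi a in Mul(K) of the classes; it is an algebra homomorphism into Out(K). *)
Definition coupling (xi : A -> mpair) : Prop :=
  [/\ (forall a, is_bimult (xi a)),
      (forall (c : F) a b, out_eq (xi (c *: a + b)) (padd (pscale c (xi a)) (xi b))) &
      (forall a b, out_eq (xi (nmul A a b)) (pmul (xi a) (xi b)))].

Definition bimult_law (xi : A -> mpair) (mu : A -> mpair) : Prop :=
  [/\ (forall a, is_bimult (mu a)),
      (forall (c : F) a b k, (mu (c *: a + b)).1 k = c *: (mu a).1 k + (mu b).1 k /\
                             (mu (c *: a + b)).2 k = c *: (mu a).2 k + (mu b).2 k),
      (forall a, out_eq (mu a) (xi a)) &
      (forall a b k, (mu a).1 ((mu b).2 k) = (mu b).2 ((mu a).1 k))].

Definition curvature (mu : A -> mpair) (a1 a2 : A) : mpair :=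
  psub (pmul (mu a1) (mu a2)) (mu (nmul A a1 a2)).

Definition hindrance (mu : A -> mpair) (h : A -> A -> K) : Prop :=
  is_bilin h /\
  forall a1 a2 k, (eps (h a1 a2)).1 k = (curvature mu a1 a2).1 k /\
                  (eps (h a1 a2)).2 k = (curvature mu a1 a2).2 k.

(* Hochschild-type differential of a bilinear map g : A x A -> K,
   using the bimodule structure a.n = u_a n, n.a = v_a n. *)
Definition hoch_d2 (mu : A -> mpair) (g : A -> A -> K) (a1 a2 a3 : A) : K :=
  (mu a1).1 (g a2 a3) - g (nmul A a1 a2) a3 + g a1 (nmul A a2 a3)
  - (mu a3).2 (g a1 a2).

Definition obs_cocycle (mu : A -> mpair) (h : A -> A -> K) : A -> A -> A -> K :=
  hoch_d2 mu h.

Definition hoch_coboundary (mu : A -> mpair) (f : A -> A -> A -> K) : Prop :=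
  exists g : A -> A -> K,
    [/\ is_bilin g, (forall a1 a2, in_anni (g a1 a2)) &
        (forall a1 a2 a3, f a1 a2 a3 = hoch_d2 mu g a1 a2 a3)].

Definition obs_vanishes (xi : A -> mpair) : Prop :=
  forall mu h, bimult_law xi mu -> hindrance mu h ->
    hoch_coboundary mu (obs_cocycle mu h).

Definition extendible (xi : A -> mpair) : Prop :=
  exists (B : nalg F) (iota : K -> B) (beta : B -> A),
    is_lin iota /\ injective iota /\
    (forall k1 k2, iota (nmul K k1 k2) = nmul B (iota k1) (iota k2)) /\
    (forall (b : B) (k : K), exists k1 k2 : K,
         nmul B b (iota k) = iota k1 /\ nmul B (iota k) b = iota k2) /\
    is_lin beta /\
    (forall b1 b2, beta (nmul B b1 b2) = nmul A (beta b1) (beta b2)) /\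
    (forall a, exists b, beta b = a) /\
    (forall b, beta b = 0 <-> exists k, b = iota k) /\
    (exists gamma : A -> B,
       is_lin gamma /\ (forall a, beta (gamma a) = a) /\
       forall a, exists m : mpair,
         (forall k, iota (m.1 k) = nmul B (gamma a) (iota k) /\
                    iota (m.2 k) = nmul B (iota k) (gamma a)) /\
         out_eq (xi a) m).

End Defs.
Arguments mpair {F} K.

From mathcomp Require Import all_boot all_order all_algebra.
From mathcomp Require Import boolp classical_sets.
Import GRing.Theory.
Local Open Scope ring_scope.
Set Implicit Arguments. Unset Strict Implicit.

(* Fix a bimultiplication law mu = (u, v) covering xi.  The key notion is a
   cocycle hindrance: a bilinear h with eps o h = R^mu and d h = 0.
   - Since the Hochschild differential is additive and two hindrances differ
     by an Anni K-valued cochain, Obs(xi) = 0 for mu holds iff mu admits a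
     cocycle hindrance (section Hindrances).  A hindrance always exists: the
     curvature is inner and bilinear, and inner pairs can be lifted linearly
     to K using a linear retraction of K onto a complement of Anni K, which
     exists by Zorn's lemma (sections LinearRetraction, InnerLift, Curvature).
   - A cocycle hindrance h makes K x A, with the product twisted by u, v and
     h, an associative algebra extending A by K and realising xi
     (section CrossedProduct).
   - Conversely, in an extension B the section can be corrected so that it
     induces exactly mu on K; its multiplicative defect is then a cocycle
     hindrance for mu (section Extension). *)

Section LinearBasics.
Variable F : fieldType.

Lemma nmul0l (R : nalg F) (y : R) : nmul R 0 y = 0.
Proof. by have := nmulZl 0 y y; rewrite !scale0r. Qed.
Lemma nmul0r (R : nalg F) (y : R) : nmul R y 0 = 0.
Proof. by have := nmulZr 0 y y; rewrite !scale0r. Qed.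
Lemma nmulNl (R : nalg F) (x y : R) : nmul R (- x) y = - nmul R x y.
Proof. by rewrite -scaleN1r nmulZl scaleN1r. Qed.
Lemma nmulNr (R : nalg F) (x y : R) : nmul R x (- y) = - nmul R x y.
Proof. by rewrite -scaleN1r nmulZr scaleN1r. Qed.
Lemma nmulBl (R : nalg F) (x y z : R) : nmul R (x - y) z = nmul R x z - nmul R y z.
Proof. by rewrite nmulDl nmulNl. Qed.
Lemma nmulBr (R : nalg F) (x y z : R) : nmul R z (x - y) = nmul R z x - nmul R z y.
Proof. by rewrite nmulDr nmulNr. Qed.

Section Lin.
Variables (V W : lmodType F) (f : V -> W) (Hf : is_lin f).
Lemma lin0 : f 0 = 0.
Proof. by have := Hf (-1) 0 0; rewrite scaler0 addr0 scaleN1r addNr. Qed.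
Lemma linD x y : f (x + y) = f x + f y.
Proof. by have := Hf 1 x y; rewrite !scale1r. Qed.
Lemma linZ c x : f (c *: x) = c *: f x.
Proof. by have := Hf c x 0; rewrite !addr0 lin0 addr0. Qed.
Lemma linB x y : f (x - y) = f x - f y.
Proof. by rewrite linD -scaleN1r linZ scaleN1r. Qed.
End Lin.

Lemma scale_add_subE (V : lmodType F) (c : F) (x y z w : V) :
  c *: x + y - (c *: z + w) = c *: (x - z) + (y - w).
Proof. by rewrite scalerBr opprD addrACA. Qed.

Lemma linB_fun (V W : lmodType F) (f g : V -> W) :
  is_lin f -> is_lin g -> is_lin (fun x => f x - g x).
Proof. by move=> Hf Hg c x y; rewrite Hf Hg scale_add_subE. Qed.

Lemma bilinB_fun (U V W : lmodType F) (f g : U -> V -> W) :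
  is_bilin f -> is_bilin g -> is_bilin (fun x y => f x y - g x y).
Proof.
move=> [f1 f2] [g1 g2]; split=> y; first exact: linB_fun (f1 y) (g1 y).
exact: linB_fun (f2 y) (g2 y).
Qed.

Lemma pairDE (V W : lmodType F) (x y : V * W) : x + y = (x.1 + y.1, x.2 + y.2).
Proof. by []. Qed.
Lemma pairZE (V W : lmodType F) c (x : V * W) : c *: x = (c *: x.1, c *: x.2).
Proof. by []. Qed.

Lemma addACA4 (V : zmodType) (a1 a2 a3 a4 b1 b2 b3 b4 : V) :
  (a1 + b1) + (a2 + b2) + (a3 + b3) + (a4 + b4) =
  (a1 + a2 + a3 + a4) + (b1 + b2 + b3 + b4).
Proof. by rewrite (addrACA a1) (addrACA (a1 + a2)) (addrACA (a1 + a2 + a3)). Qed.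

End LinearBasics.

Section LinearRetraction.
Variables (F : fieldType) (V : lmodType F).

Definition lin_closed (S : set V) : Prop :=
  forall (c : F) x y, S x -> S y -> S (c *: x + y).

Lemma lin_closed0 (S : set V) x : lin_closed S -> S x -> S 0.
Proof. by move=> SC Sx; have := SC (-1) x x Sx Sx; rewrite scaleN1r addNr. Qed.

Lemma lin_closedZ (S : set V) c x : lin_closed S -> S x -> S (c *: x).
Proof. by move=> SC Sx; have := SC c x 0 Sx (lin_closed0 SC Sx); rewrite addr0. Qed.

Lemma lin_closedB (S : set V) x y : lin_closed S -> S x -> S y -> S (x - y).
Proof. by move=> SC Sx Sy; rewrite addrC -scaleN1r; exact: SC. Qed.

Variable S : set V.
Hypotheses (S0 : S 0) (SC : lin_closed S).

(* Candidates for a complement of S: linearly closed sets meeting S in 0. *)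
Definition transversal (C : set V) : Prop :=
  lin_closed C /\ forall x, C x -> S x -> x = 0.

Definition maximal_transversal (C : set V) : Prop :=
  transversal C /\ forall B, (C `<` B)%classic -> ~ transversal B.

Lemma exists_maximal_transversal : exists C, maximal_transversal C.
Proof.
apply: Zorn_bigcup => Fm FP Ftot; split.
  move=> c x y [X FX Xx] [Y FY Yy].
  have [XY|YX] := Ftot _ _ FX FY.
    by exists Y => //; apply: (FP _ FY).1 => //; exact: XY.
  by exists X => //; apply: (FP _ FX).1 => //; exact: YX.
by move=> x [X FX Xx]; apply: (FP _ FX).2.
Qed.

Lemma maximal_transversal0 C : maximal_transversal C -> C 0.
Proof.
move=> [[CC CS] Cmax]; have [[x Cx]|nC] := pselect (exists x, C x).
  exact: lin_closed0 Cx.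
exfalso; apply: (Cmax (fun x : V => x = 0)); last first.
  by split=> [c x y -> ->|x ->//]; rewrite scaler0 addr0.
split=> [x Cx|/(_ 0 erefl) C0]; last by apply: nC; exists 0.
by exfalso; apply: nC; exists x.
Qed.

Lemma maximal_transversal_spans C : maximal_transversal C ->
  forall v, exists s c, [/\ S s, C c & v = s + c].
Proof.
move=> Cmaxt v; have C0 := maximal_transversal0 Cmaxt.
move: Cmaxt => [[CC CS] Cmax]; apply: contrapT => nex.
pose C' := fun x : V => exists c t, C c /\ x = c + t *: v.
apply: (Cmax C'); split.
- by move=> x Cx; exists x, 0; rewrite scale0r addr0.
- move=> /(_ v) Cv; apply: nex; exists 0, v; split=> //; last by rewrite add0r.
  by apply: Cv; exists 0, 1; rewrite add0r scale1r.
- move=> a x y [c1 [t1 [Cc1 ->]]] [c2 [t2 [Cc2 ->]]].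
  exists (a *: c1 + c2), (a * t1 + t2); split; first exact: CC.
  by rewrite scalerDr scalerDl scalerA addrACA.
- move=> x [c [t [Cc ->]]] Sx; have [t0|tn0] := eqVneq t 0.
    by move: Sx; rewrite t0 scale0r addr0 => Sc; rewrite (CS _ Cc Sc).
  exfalso; apply: nex; exists (t^-1 *: (c + t *: v)), (- t^-1 *: c); split.
  + exact: lin_closedZ.
  + exact: lin_closedZ.
  + by rewrite scalerDr scalerA mulVf // scale1r scaleNr addrAC addrN add0r.
Qed.

Lemma transversal_decomp_uniq C s1 c1 s2 c2 : transversal C ->
  S s1 -> C c1 -> S s2 -> C c2 -> s1 + c1 = s2 + c2 -> c1 = c2.
Proof.
move=> [CC CS] Ss1 Cc1 Ss2 Cc2 E; apply/eqP; rewrite -subr_eq0; apply/eqP.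
apply: CS; first exact: lin_closedB.
have -> : c1 - c2 = s2 - s1.
  by apply/eqP; rewrite subr_eq addrAC -E addrC addrA addNr add0r.
exact: lin_closedB.
Qed.

(* The projection onto the C-component of a maximal transversal C. *)
Lemma linear_retraction : exists q : V -> V,
  [/\ is_lin q, forall v, S (v - q v) & forall s, S s -> q s = 0].
Proof.
have [C Cmaxt] := exists_maximal_transversal.
have Ct := Cmaxt.1; have C0 := maximal_transversal0 Cmaxt.
have dec v : exists p : V * V, [/\ S p.1, C p.2 & v = p.1 + p.2].
  by have [s [c [Ss Cc ->]]] := maximal_transversal_spans Cmaxt v; exists (s, c).
pose pr v := sval (cid (dec v)).
have prP v : [/\ S (pr v).1, C (pr v).2 & v = (pr v).1 + (pr v).2].
  by rewrite /pr; case: cid.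
exists (fun v => (pr v).2); split.
- move=> a x y; have [Sx Cx Ex] := prP x; have [Sy Cy Ey] := prP y.
  have [Sz Cz Ez] := prP (a *: x + y).
  apply: (transversal_decomp_uniq Ct Sz Cz (SC a Sx Sy) (Ct.1 a _ _ Cx Cy)).
  by rewrite -Ez {1}Ex {1}Ey scalerDr addrACA.
- by move=> v; have [Sv _ Ev] := prP v; rewrite {1}Ev addrK.
- move=> s Ss; have [S1 C1 E1] := prP s.
  by symmetry; apply: (transversal_decomp_uniq Ct Ss C0 S1 C1); rewrite addr0.
Qed.

End LinearRetraction.

(* An element k represents a pair m when
   eps k = m pointwise; representatives are unique up to Anni K, and the
   retraction along Anni K lets us choose them linearly in families. *)
Section InnerLift.
Variables (F : fieldType) (K : nalg F).

Definition peq (m1 m2 : mpair K) : Prop :=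
  forall x, m1.1 x = m2.1 x /\ m1.2 x = m2.2 x.

Definition represents (k : K) (m : mpair K) : Prop :=
  forall x, nmul K k x = m.1 x /\ nmul K x k = m.2 x.

Lemma anni0 : in_anni (K:=K) 0.
Proof. by move=> k; rewrite nmul0l nmul0r. Qed.

Lemma anni_lin_closed : lin_closed (@in_anni F K).
Proof.
move=> c x y Hx Hy k; rewrite nmulDl nmulDr nmulZl nmulZr.
by have [-> ->] := Hx k; have [-> ->] := Hy k; rewrite scaler0 addr0.
Qed.

Lemma represents_diff_anni k k' m :
  represents k m -> represents k' m -> in_anni (k - k').
Proof.
move=> Hk Hk' x; rewrite nmulBl nmulBr.
by have [-> ->] := Hk x; have [-> ->] := Hk' x; rewrite !subrr.
Qed.

Lemma represents_anni_shift k n m :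
  represents k m -> in_anni n -> represents (k - n) m.
Proof. by move=> Hk Hn x; rewrite nmulBl nmulBr; have [-> ->] := Hn x; rewrite !subr0. Qed.

Lemma linear_lift (I : Type) (m : I -> mpair K) :
  (forall i, exists k, represents k (m i)) ->
  exists H : I -> K, (forall i, represents (H i) (m i)) /\
    forall i j l (c : F), peq (m i) (padd (pscale c (m j)) (m l)) ->
      H i = c *: H j + H l.
Proof.
move=> ex.
have [q [qL qA q0]] := linear_retraction anni0 anni_lin_closed.
have q_represents k m0 : represents k m0 -> represents (q k) m0.
  by move=> Hk; have := represents_anni_shift Hk (qA k); rewrite opprB addrC subrK.
pose k0 i := sval (cid (ex i)).
have k0P i : represents (k0 i) (m i) by rewrite /k0; case: cid.
exists (fun i => q (k0 i)); split=> [i|i j l c E]; first exact: q_represents.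
rewrite -(linZ qL) -(linD qL); apply/eqP; rewrite -subr_eq0 -(linB qL); apply/eqP.
apply: q0 => x; rewrite nmulBl nmulBr nmulDl nmulDr nmulZl nmulZr.
have [-> ->] := k0P i x; have [-> ->] := k0P j x; have [-> ->] := k0P l x.
by have [-> ->] := E x; rewrite !subrr.
Qed.

End InnerLift.

Section Hindrances.
Variables (F : fieldType) (A K : nalg F) (mu : A -> mpair K).
Hypothesis mu_bimult : forall a, is_bimult (mu a).

Lemma d2_regroup (V : zmodType) (a a' b b' c c' d d' : V) :
  (a - a') - (b - b') + (c - c') - (d - d') = (a - b + c - d) - (a' - b' + c' - d').
Proof. by rewrite !opprB !opprD !opprK !addrA [RHS](ACl (1*6*7*2*3*8*5*4))/=. Qed.

Lemma hoch_d2B (g1 g2 : A -> A -> K) a1 a2 a3 :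
  hoch_d2 mu (fun x y => g1 x y - g2 x y) a1 a2 a3 =
  hoch_d2 mu g1 a1 a2 a3 - hoch_d2 mu g2 a1 a2 a3.
Proof.
have [uL _ _ _ _] := mu_bimult a1; have [_ vL _ _ _] := mu_bimult a3.
by rewrite /hoch_d2 (linB uL) (linB vL) d2_regroup.
Qed.

Definition cocycle_hindrance (h : A -> A -> K) : Prop :=
  hindrance mu h /\ forall a1 a2 a3, hoch_d2 mu h a1 a2 a3 = 0.

(* If some hindrance is a cocycle, the obstruction cocycle of any other
   hindrance h is the coboundary of the difference. *)
Lemma coboundary_of_cocycle_hindrance h h' :
  cocycle_hindrance h' -> hindrance mu h -> hoch_coboundary mu (obs_cocycle mu h).
Proof.
move=> [[h'B h'R] h'C] [hB hR]; exists (fun x y => h x y - h' x y); split.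
- exact: bilinB_fun.
- by move=> a1 a2; apply: represents_diff_anni (hR a1 a2) (h'R a1 a2).
- by move=> a1 a2 a3; rewrite hoch_d2B h'C subr0.
Qed.

(* Conversely, correcting a hindrance by an annihilator-valued primitive of
   its obstruction cocycle gives a cocycle hindrance. *)
Lemma cocycle_hindrance_of_coboundary h :
  hindrance mu h -> hoch_coboundary mu (obs_cocycle mu h) ->
  exists h', cocycle_hindrance h'.
Proof.
move=> [hB hR] [g [gB gA gd]]; exists (fun x y => h x y - g x y); split.
  split; first exact: bilinB_fun.
  by move=> a1 a2; apply: represents_anni_shift (hR a1 a2) (gA a1 a2).
by move=> a1 a2 a3; rewrite hoch_d2B -gd subrr.
Qed.

End Hindrances.

Section Curvature.
Variables (F : fieldType) (A K : nalg F) (xi mu : A -> mpair K).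

Lemma curvature_regroup (V : zmodType) (p x1 x2 x3 c e : V) :
  x1 + x2 + x3 - c - e = p + x1 + (x2 + x3) - (p + c + e).
Proof. by rewrite !opprD !addrA [RHS](ACl ((1*5)*2*3*4*6*7))/= subrr add0r. Qed.

(* Writing mu a = xi a + eps e_a and xi (a1 a2) = xi a1 xi a2 + eps c12,
   the curvature is eps of u_{a1} e2 + v_{a2} e1 + e1 e2 - c12 - e12. *)
Lemma curvature_inner a1 a2 : coupling xi -> bimult_law xi mu ->
  exists k, represents k (curvature mu a1 a2).
Proof.
move=> [xib _ xim] [_ _ muxi _].
have [e1 E1] := muxi a1; have [e2 E2] := muxi a2; have [e12 E12] := muxi (nmul A a1 a2).
have [c12 C12] := xim a1 a2.
have [xL1 _ xmid1 xu1 _] := xib a1; have [_ xR2 xmid2 _ xv2] := xib a2.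
exists ((xi a1).1 e2 + (xi a2).2 e1 + nmul K e1 e2 - c12 - e12) => x.
rewrite /curvature /psub /pmul /=; split.
- rewrite (E1 _).1 !(E2 _).1 (E12 _).1 (C12 _).1 /= (linD xL1) xu1 nmulDr xmid2 nmulA.
  by rewrite !nmulBl !nmulDl; exact: curvature_regroup.
- rewrite (E2 _).2 !(E1 _).2 (E12 _).2 (C12 _).2 /= (linD xR2) xv2 nmulDl -xmid1 -nmulA.
  rewrite !nmulBr !nmulDr [in LHS](addrC (nmul K x ((xi a1).1 e2))).
  exact: curvature_regroup.
Qed.

Hypothesis mu_bimult : forall a, is_bimult (mu a).
Hypothesis mu_lin : forall (c : F) a b,
  peq (mu (c *: a + b)) (padd (pscale c (mu a)) (mu b)).

Lemma curvature_linl (c : F) a a' b :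
  peq (curvature mu (c *: a + a') b)
      (padd (pscale c (curvature mu a b)) (curvature mu a' b)).
Proof.
have [_ vL _ _ _] := mu_bimult b.
move=> x; rewrite /curvature /psub /pmul /= nmulDl nmulZl.
rewrite (mu_lin c a a' x).2 (mu_lin c a a' ((mu b).1 x)).1.
have [-> ->] := mu_lin c (nmul A a b) (nmul A a' b) x.
by rewrite (linD vL) (linZ vL) !scale_add_subE.
Qed.

Lemma curvature_linr (c : F) a b b' :
  peq (curvature mu a (c *: b + b'))
      (padd (pscale c (curvature mu a b)) (curvature mu a b')).
Proof.
have [uL _ _ _ _] := mu_bimult a.
move=> x; rewrite /curvature /psub /pmul /= nmulDr nmulZr.
rewrite (mu_lin c b b' x).1 (mu_lin c b b' ((mu a).2 x)).2.
have [-> ->] := mu_lin c (nmul A a b) (nmul A a b') x.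
by rewrite (linD uL) (linZ uL) !scale_add_subE.
Qed.

End Curvature.

(* The curvature values are inner and depend bilinearly on (a1, a2), so they
   lift linearly to a hindrance. *)
Lemma hindrance_exists (F : fieldType) (A K : nalg F) (xi mu : A -> mpair K) :
  coupling xi -> bimult_law xi mu -> exists h, hindrance mu h.
Proof.
move=> cpl law; have [mub mul _ _] := law.
have [H [HR Hrel]] := linear_lift (fun p : (A * A)%type => curvature_inner p.1 p.2 cpl law).
exists (fun a1 a2 => H (a1, a2)); split=> [|a1 a2]; last exact: HR (a1, a2).
split=> [b c a a'|a c b b'].
  by apply: (Hrel (c *: a + a', b) (a, b) (a', b)); exact: (curvature_linl mub mul).
by apply: (Hrel (a, c *: b + b') (a, b) (a, b')); exact: (curvature_linr mub mul).
Qed.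

(* The crossed product K x A with product
     (k1,a1)(k2,a2) = (k1 k2 + u_{a1} k2 + v_{a2} k1 + h(a1,a2), a1 a2)
   is associative exactly because h is a cocycle hindrance; it extends A by
   the ideal K x 0 and realises the coupling through the section a |-> (0,a). *)
Section CrossedProduct.
Variables (F : fieldType) (A K : nalg F) (mu : A -> mpair K) (h : A -> A -> K).
Hypothesis mu_bimult : forall a, is_bimult (mu a).
Hypothesis mu_lin : forall (c : F) a b,
  peq (mu (c *: a + b)) (padd (pscale c (mu a)) (mu b)).
Hypothesis mu_comm : forall a b k, (mu a).1 ((mu b).2 k) = (mu b).2 ((mu a).1 k).
Hypothesis h_cocycle : cocycle_hindrance mu h.

Local Notation u a := (mu a).1.
Local Notation v a := (mu a).2.

Let uL a : is_lin (u a). Proof. by case: (mu_bimult a). Qed.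
Let vL a : is_lin (v a). Proof. by case: (mu_bimult a). Qed.
Let u_in_a k : is_lin (fun a => u a k). Proof. by move=> c a b; case: (mu_lin c a b k). Qed.
Let v_in_a k : is_lin (fun a => v a k). Proof. by move=> c a b; case: (mu_lin c a b k). Qed.
Let hL1 b : is_lin (h^~ b). Proof. by case: h_cocycle => [[[]]]. Qed.
Let hL2 a : is_lin (h a). Proof. by case: h_cocycle => [[[]]]. Qed.
Let uA0 k : u 0 k = 0. Proof. exact: (lin0 (u_in_a k)). Qed.
Let vA0 k : v 0 k = 0. Proof. exact: (lin0 (v_in_a k)). Qed.
Let h0l b : h 0 b = 0. Proof. exact: lin0 (hL1 b). Qed.
Let h0r a : h a 0 = 0. Proof. exact: lin0 (hL2 a). Qed.

Definition cmul (x y : (K * A)%type) : (K * A)%type :=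
  (nmul K x.1 y.1 + u x.2 y.1 + v y.2 x.1 + h x.2 y.2, nmul A x.2 y.2).

(* Matching the ten terms of both bracketings of the first component: four
   pairs agree by the bimultiplication axioms, two pairs of terms combine by
   the curvature identities, and the two h-terms by the cocycle identity. *)
Lemma assoc_regroup (V : zmodType)
    (L1 L2 L3 L4 L5 L6 L7 L8 L9 L10 R1 R2 R3 R4 R5 R6 R7 R8 R9 R10 : V) :
  L1 = R1 -> L2 = R5 -> L3 = R2 -> L4 + L5 = R6 -> L6 = R3 -> L7 = R7 ->
  L8 = R9 + R4 -> L9 + L10 = R8 + R10 ->
  (L1 + L2 + L3 + L4) + L5 + (L6 + L7 + L8 + L9) + L10 =
  (R1 + R2 + R3 + R4) + (R5 + R6 + R7 + R8) + R9 + R10.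
Proof.
move=> -> -> -> <- -> -> -> E.
rewrite !addrA [LHS](ACl ((1*3*6*9*2*4*5*7*8)*(10*11)))/= E.
by rewrite [RHS](ACl ((1*2*3*4*5*6*7*8*10)*(9*11)))/=.
Qed.

Lemma cmulA x y z : cmul x (cmul y z) = cmul (cmul x y) z.
Proof.
have [[_ hR] hC] := h_cocycle.
rewrite /cmul /=; congr pair; last exact: nmulA.
rewrite !nmulDl !nmulDr !(linD (uL _)) !(linD (vL _)); symmetry.
apply: assoc_regroup.
- by rewrite nmulA.
- by case: (mu_bimult x.2) => _ _ _ -> _.
- by case: (mu_bimult y.2) => _ _ -> _ _.
- by have [/= -> _] := hR x.2 y.2 z.1; rewrite subrK.
- by case: (mu_bimult z.2) => _ _ _ _ ->.
- by rewrite mu_comm.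
- by have [_ /= ->] := hR y.2 z.2 x.1; rewrite addrC subrK.
- have /eqP := hC x.2 y.2 z.2; rewrite /hoch_d2 subr_eq0 => /eqP <-.
  by rewrite addrAC subrK.
Qed.

Lemma cmulDl x y z : cmul (x + y) z = cmul x z + cmul y z.
Proof.
rewrite /cmul !pairDE /=; congr pair; last exact: nmulDl.
by rewrite nmulDl (linD (u_in_a _)) (linD (vL _)) (linD (hL1 _)) addACA4.
Qed.

Lemma cmulDr x y z : cmul x (y + z) = cmul x y + cmul x z.
Proof.
rewrite /cmul !pairDE /=; congr pair; last exact: nmulDr.
by rewrite nmulDr (linD (uL _)) (linD (v_in_a _)) (linD (hL2 _)) addACA4.
Qed.

Lemma cmulZl c x y : cmul (c *: x) y = c *: cmul x y.
Proof.
rewrite /cmul !pairZE /=; congr pair; last exact: nmulZl.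
by rewrite nmulZl (linZ (u_in_a _)) (linZ (vL _)) (linZ (hL1 _)) !scalerDr.
Qed.

Lemma cmulZr c x y : cmul x (c *: y) = c *: cmul x y.
Proof.
rewrite /cmul !pairZE /=; congr pair; last exact: nmulZr.
by rewrite nmulZr (linZ (uL _)) (linZ (v_in_a _)) (linZ (hL2 _)) !scalerDr.
Qed.

Definition crossed_product : nalg F :=
  @NAlg F (K * A)%type cmul cmulA cmulDl cmulDr cmulZl cmulZr.

(* The crossed product is an extension realising every coupling covered by
   mu: K sits as (k, 0), beta is the second projection and a |-> (0, a) is a
   section inducing mu. *)
Lemma crossed_product_extendible (xi : A -> mpair K) :
  (forall a, out_eq (mu a) (xi a)) -> extendible xi.
Proof.
move=> muxi; exists crossed_product, (fun k => (k, 0)), (fun b => b.2).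
split; first by move=> c x y; rewrite /= pairZE pairDE /= scaler0 addr0.
split; first by move=> x y [].
split; first by move=> k1 k2; rewrite /= /cmul /= uA0 vA0 h0l nmul0l !addr0.
split.
  move=> b k; exists (nmul K b.1 k + u b.2 k), (nmul K k b.1 + v b.2 k).
  by rewrite /= /cmul /= vA0 uA0 h0l h0r nmul0l nmul0r !addr0.
do 3!split=> //; first by move=> a; exists (0, a).
split; first by move=> [k a] /=; split=> [->|[k' []//]]; exists k.
exists (fun a => (0, a)); split; first by move=> c x y; rewrite pairZE pairDE /= scaler0 addr0.
split=> // a; exists (mu a); split.
  move=> k; rewrite /= /cmul /= uA0 vA0 h0l h0r.
  by split; rewrite !nmul0l !nmul0r !add0r !addr0.
have [k0 Hk0] := muxi a; exists (- k0) => k; rewrite /= nmulNl nmulNr.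
by have [-> ->] := Hk0 k; rewrite /= !addrK.
Qed.

End CrossedProduct.

(* In an extension B of A by K, the section gamma can be corrected by a
   linear map A -> K so that conjugation by the new section T is exactly mu;
   then T a1 T a2 - T (a1 a2) lies in K and is a cocycle hindrance. *)
Section Extension.
Variables (F : fieldType) (A K B : nalg F) (iota : K -> B) (beta : B -> A).
Variable mu : A -> mpair K.
Hypotheses (iota_lin : is_lin iota) (iota_inj : injective iota)
  (iota_mul : forall k1 k2, iota (nmul K k1 k2) = nmul B (iota k1) (iota k2))
  (beta_lin : is_lin beta)
  (beta_mul : forall b1 b2, beta (nmul B b1 b2) = nmul A (beta b1) (beta b2))
  (beta_ker : forall b, beta b = 0 <-> exists k, b = iota k).
Local Notation u a := (mu a).1.
Local Notation v a := (mu a).2.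

Definition adapted (T : A -> B) : Prop :=
  forall a k, iota (u a k) = nmul B (T a) (iota k) /\ iota (v a k) = nmul B (iota k) (T a).

Lemma cancel_conj (V : zmodType) (x a b : V) : x + b + a - x = a + b.
Proof. by rewrite (ACl ((1*4)*3*2))/= subrr add0r. Qed.

(* Given a linear section gamma inducing xi, the pairs mu a - (conjugation by
   gamma a) are inner and linear in a; lifting them linearly to t : A -> K,
   the corrected section a |-> gamma a + iota (t a) is adapted. *)
Lemma adapted_section (xi : A -> mpair K) (gamma : A -> B) :
  is_lin gamma -> (forall a, beta (gamma a) = a) ->
  (forall a, exists m : mpair K,
     (forall k, iota (m.1 k) = nmul B (gamma a) (iota k) /\
                iota (m.2 k) = nmul B (iota k) (gamma a)) /\ out_eq (xi a) m) ->
  (forall (c : F) a b, peq (mu (c *: a + b)) (padd (pscale c (mu a)) (mu b))) ->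
  (forall a, out_eq (mu a) (xi a)) ->
  exists T, [/\ is_lin T, forall a, beta (T a) = a & adapted T].
Proof.
move=> gL gsec gxi mu_lin muxi.
pose m a := sval (cid (gxi a)).
have mP a : (forall k, iota ((m a).1 k) = nmul B (gamma a) (iota k) /\
                       iota ((m a).2 k) = nmul B (iota k) (gamma a)) /\ out_eq (xi a) (m a).
  by rewrite /m; case: cid.
have m_lin c a a' : peq (m (c *: a + a')) (padd (pscale c (m a)) (m a')).
  move=> k; split; apply: iota_inj; rewrite iota_lin.
    by rewrite !((mP _).1 k).1 gL nmulDl nmulZl.
  by rewrite !((mP _).1 k).2 gL nmulDr nmulZr.
pose d a := psub (mu a) (m a).
have d_inner a : exists k, represents k (d a).
  have [e1 E1] := muxi a; have [e2 E2] := (mP a).2.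
  exists (e1 + e2) => x; rewrite /d /psub /= nmulDl nmulDr.
  by have [-> ->] := E1 x; have [/= -> ->] := E2 x; rewrite /= !cancel_conj.
have [t [tR trel]] := linear_lift d_inner.
have tL : is_lin t.
  move=> c a a'; apply: trel => x; rewrite /d /psub /=.
  by have [-> ->] := mu_lin c a a' x; have [-> ->] := m_lin c a a' x; rewrite !scale_add_subE.
have bi k : beta (iota k) = 0 by apply/beta_ker; exists k.
exists (fun a => gamma a + iota (t a)); split.
- by move=> c a a'; rewrite gL tL iota_lin scalerDr addrACA.
- by move=> a; rewrite (linD beta_lin) gsec bi addr0.
move=> a k; have [t1 t2] := tR a k; have [m1 m2] := (mP a).1 k.
rewrite /d /psub /= in t1 t2.
rewrite nmulDl nmulDr -!iota_mul t1 t2 -m1 -m2 -!(linD iota_lin).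
by split; congr iota; rewrite addrC subrK.
Qed.

Variable T : A -> B.
Hypotheses (T_lin : is_lin T) (T_sec : forall a, beta (T a) = a) (T_adapted : adapted T).

(* Cancellation pattern of the four terms of d applied to the defect. *)
Lemma d2_section_regroup (V : zmodType) (p q r s : V) :
  (p - q) - (r - s) + (q - s) - (p - r) = 0.
Proof.
rewrite !opprB !addrA.
by rewrite (ACl ((1*8)*(5*2)*(3*6)*(7*4)))/= !subrr !addr0.
Qed.

Lemma section_defect_in_K a1 a2 :
  exists k, iota k = nmul B (T a1) (T a2) - T (nmul A a1 a2).
Proof.
have /beta_ker [k Ek] : beta (nmul B (T a1) (T a2) - T (nmul A a1 a2)) = 0.
  by rewrite (linB beta_lin) beta_mul !T_sec subrr.
by exists k.
Qed.

(* The defect of an adapted section represents the curvature of mu (because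
   T induces mu), is bilinear, and is a cocycle by associativity in B. *)
Lemma section_cocycle_hindrance : exists h, cocycle_hindrance mu h.
Proof.
pose H a1 a2 := sval (cid (section_defect_in_K a1 a2)).
have HP a1 a2 : iota (H a1 a2) = nmul B (T a1) (T a2) - T (nmul A a1 a2).
  by rewrite /H; case: cid.
exists H; split; first split.
- split=> [b c a a'|a c b b']; apply: iota_inj; rewrite iota_lin !HP T_lin.
    by rewrite !nmulDl !nmulZl T_lin scale_add_subE.
  by rewrite !nmulDr !nmulZr T_lin scale_add_subE.
- move=> a1 a2 k; rewrite /curvature /psub /pmul /=.
  split; apply: iota_inj; rewrite iota_mul HP (linB iota_lin).
    by rewrite !(T_adapted _ _).1 nmulBl nmulA.
  by rewrite !(T_adapted _ _).2 nmulBr nmulA.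
- move=> a1 a2 a3; apply: iota_inj; rewrite (lin0 iota_lin) /hoch_d2.
  rewrite (linB iota_lin) (linD iota_lin) (linB iota_lin).
  rewrite (T_adapted _ _).1 (T_adapted _ _).2 !HP.
  rewrite nmulBr nmulBl (nmulA (T a1)) (nmulA a1 a2 a3).
  exact: d2_section_regroup.
Qed.

End Extension.

Lemma extendible_cocycle_hindrance (F : fieldType) (A K : nalg F) (xi mu : A -> mpair K) :
  extendible xi -> bimult_law xi mu -> exists h, cocycle_hindrance mu h.
Proof.
move=> [B [iota [beta [iL [iinj [imul [_ [bL [bmul [_ [bker [gamma [gL [gsec gxi]]]]]]]]]]]]]].
move=> [mub mul muxi _].
have [T [TL Tsec Tad]] := adapted_section iL iinj imul bL bker gL gsec gxi mul muxi.
exact: (section_cocycle_hindrance iL iinj imul bL bmul bker TL Tsec Tad).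
Qed.

Theorem mainTheorem17 (F : fieldType) (A K : nalg F) (xi : A -> mpair K) :
  coupling xi ->
  (exists mu : A -> mpair K, bimult_law xi mu) ->
  (extendible xi <-> obs_vanishes xi).
Proof.
move=> cpl [mu mu_law]; split.
- move=> ext nu h nu_law h_hind.
  have [h' h'_coc] := extendible_cocycle_hindrance ext nu_law.
  have [nub _ _ _] := nu_law.
  exact: (coboundary_of_cocycle_hindrance nub h'_coc h_hind).
- move=> obs; have [mub mul muxi muc] := mu_law.
  have [h0 h0_hind] := hindrance_exists cpl mu_law.
  have [h h_coc] := cocycle_hindrance_of_coboundary mub h0_hind (obs mu h0 mu_law h0_hind).
  exact: (crossed_product_extendible mub mul muc h_coc muxi).
Qed.
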